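(* Let $T_1$ be a quadtree in $\mathbb{R}^d$ with extended quadtree $T^*$, and let $\{C_i\in T^*\mid i\in[a,b]\}$ be a chain of length $k=b-a$. Then for every index $j$ with $j,j+1\in[a,b]$, the cells $C_j$ and $C_{j+1}$ are not family related.
   Context: A quadtree on an axis-aligned root hypercube $R\subset\mathbb{R}^d$ is a hierarchical decomposition in which every node has an associated axis-aligned hypercube (cell) and is either a leaf or has $2^d$ equal-sized children whose cells subdivide its cell. The size $|C|$ of a cell is its edge length. Two cells are neighbors if they are interior-disjoint and share (part of) a $(d-1)$-dimensional facet. Two cells $C_1,C_2$ with $|C_1|\le|C_2|$ are family related if the parent of $C_2$ is an ancestor of $C_1$. For an integer $j$, a cell $C$ is $2^j$-smooth if every leaf neighboring $C$ has size at most $2^j|C|$. Extended quadtree: the cells of $T_1$ get brand $1$. Recursively, for $j\ge1$, let $T^j$ be the quadtree formed by $\bigcup_{i\le j}T_i$, and let $T_{j+1}$ be the minimal set of cells obtained by splitting cells of $T^j$ such that every cell of $T_j$ is $2^j$-smooth in the resulting quadtree; the cells of $T_{j+1}$ get brand $j+1$. The extended quadtree is $T^*=T^{d+1}$. A chain of length $k=b-a$ in $T^*$ is an ordered set $\{C_i\in T^*\mid i\in[a,b]\}$ such that each $C_j$ has brand $j$ and, for each $j\in[a,b-1]$, $C_j$ neighbors $C_{j+1}$ and $|C_{j+1}|=2^j|C_j|$. *)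

From mathcomp Require Import all_boot.
Set Implicit Arguments. Unset Strict Implicit. Unset Printing Implicit Defensive.

(* The root hypercube R is normalised (by an affine map preserving all the
   notions involved) to [0,1]^d.  A cell of level l with integer coordinates
   x : 'I_d -> nat is the cube  prod_i [x_i 2^-l, (x_i+1) 2^-l];
   its size is 2^-l |R|.  It is a cell of the root iff x_i < 2^l for all i. *)
Definition cell (d : nat) := (nat * {ffun 'I_d -> nat})%type.

Section Cells.
Variable d : nat.
Implicit Types C A : cell d.

Definition lvl C : nat := C.1.
Definition pos C (i : 'I_d) : nat := C.2 i.

Definition valid_cell C : Prop := forall i, pos C i < 2 ^ lvl C.

Definition root_cell : cell d := (0, [ffun => 0]).

Definition parent C : cell d := ((lvl C).-1, [ffun i => pos C i %/ 2]).

Definition ancestor A C : Prop :=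
  lvl A <= lvl C /\ forall i, pos C i %/ 2 ^ (lvl C - lvl A) = pos A i.

(* endpoints of the i-th side of C, in units 2^-L (L >= lvl C) *)
Definition lo (L : nat) C i := pos C i * 2 ^ (L - lvl C).
Definition hi (L : nat) C i := (pos C i).+1 * 2 ^ (L - lvl C).

(* C1, C2 are interior-disjoint and share part of a (d-1)-dim facet:
   in one coordinate the sides touch at an endpoint, in all other
   coordinates the sides overlap in an interval of positive length. *)
Definition neighbors C1 C2 : Prop :=
  let L := maxn (lvl C1) (lvl C2) in
  exists i : 'I_d,
    (hi L C1 i = lo L C2 i \/ hi L C2 i = lo L C1 i) /\
    forall k : 'I_d, k != i -> lo L C1 k < hi L C2 k /\ lo L C2 k < hi L C1 k.

Definition family_related_ord C1 C2 : Prop :=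
  lvl C2 <= lvl C1 /\ 0 < lvl C2 /\ ancestor (parent C2) C1.

Definition family_related C1 C2 : Prop :=
  family_related_ord C1 C2 \/ family_related_ord C2 C1.

(* A quadtree: a finite set of cells of the root, containing the root,
   closed under parents, and in which every node is a leaf or has all its
   2^d children (i.e. siblings of a member are members). *)
Definition quadtree (T : cell d -> Prop) : Prop :=
  [/\ forall C, T C -> valid_cell C,
      T root_cell,
      forall C, T C -> 0 < lvl C -> T (parent C),
      forall C C', T C -> 0 < lvl C -> valid_cell C' -> lvl C' = lvl C ->
                   parent C' = parent C -> T C'
    & exists N, forall C, T C -> lvl C <= N].

Definition leaf (T : cell d -> Prop) C : Prop :=
  T C /\ forall C', T C' -> lvl C' = (lvl C).+1 -> parent C' <> C.

(* C is 2^j-smooth in T: every leaf L of T neighbouring C has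
   |L| <= 2^j |C|, i.e. lvl C <= lvl L + j. *)
Definition smooth (T : cell d -> Prop) (j : nat) C : Prop :=
  forall L : cell d, leaf T L -> neighbors L C -> lvl C <= lvl L + j.

Definition subtree (T T' : cell d -> Prop) : Prop := forall C, T C -> T' C.

Definition smooth_refinement (Told Tj : cell d -> Prop) (j : nat)
  (Q : cell d -> Prop) : Prop :=
  quadtree Q /\ subtree Told Q /\ forall C, Tj C -> smooth Q j C.

Definition minimal_smooth_refinement (Told Tj : cell d -> Prop) (j : nat)
  (Q : cell d -> Prop) : Prop :=
  smooth_refinement Told Tj j Q /\
  forall Q', smooth_refinement Told Tj j Q' -> subtree Q Q'.

Definition upto (Tb : nat -> cell d -> Prop) (j : nat) C : Prop :=
  exists2 i, 1 <= i <= j & Tb i C.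

(* Tb i = the set T_i of cells of brand i of the extended quadtree of T1
   (brands 1 .. d+1; T^* = upto Tb d.+1). *)
Definition extended_quadtree (T1 : cell d -> Prop) (Tb : nat -> cell d -> Prop)
  : Prop :=
  [/\ forall C, Tb 1 C <-> T1 C,
      forall i C, (i = 0 \/ d.+1 < i) -> ~ Tb i C
    & forall j, 1 <= j <= d ->
        exists Q, minimal_smooth_refinement (upto Tb j) (Tb j) j Q /\
          forall C, Tb j.+1 C <-> (Q C /\ ~ upto Tb j C)].

Definition chain (Tb : nat -> cell d -> Prop) (a b : nat) (Cs : nat -> cell d)
  : Prop :=
  a <= b /\
  (forall i, a <= i <= b -> Tb i (Cs i)) /\
  (forall j, a <= j < b ->
     neighbors (Cs j) (Cs j.+1) /\ lvl (Cs j) = lvl (Cs j.+1) + j).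

End Cells.

From mathcomp Require Import all_boot.
From mathcomp Require Import zify.
From Stdlib Require Import Classical.

Set Implicit Arguments.
Unset Strict Implicit.
Unset Printing Implicit Defensive.

(* Only the level equation of the chain matters.  Since [|C_(j+1)| = 2^j |C_j|]
   with [j >= 1], family relatedness can only mean that the parent of
   [C_(j+1)] is an ancestor of [C_j].  The quadtree [T^j] contains [C_j],
   hence its ancestor at the level of [C_(j+1)], which is a sibling of
   [C_(j+1)]; as nodes of a quadtree have all their children, [C_(j+1)] lies
   in [T^j] and cannot have brand [j+1]. *)

Section Ancestors.
Variable d : nat.
Implicit Types (C A : cell d) (T : cell d -> Prop).

Definition anc (k : nat) C : cell d := (lvl C - k, [ffun i => pos C i %/ 2 ^ k]).

Lemma anc0 C : anc 0 C = C.
Proof.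
case: C => l f; rewrite /anc /lvl /pos /= subn0; congr pair.
by apply/ffunP => i; rewrite ffunE expn0 divn1.
Qed.

Lemma parent_anc k C : parent (anc k C) = anc k.+1 C.
Proof.
rewrite /parent /anc /lvl /pos /=; congr pair; first by rewrite subnS.
by apply/ffunP => i; rewrite !ffunE expnS mulnC divnMA.
Qed.

Lemma ancestor_anc A C : ancestor A C -> anc (lvl C - lvl A) C = A.
Proof.
case: A => l f [lelC posA]; rewrite /anc /lvl /= in lelC *; congr pair; first by lia.
by apply/ffunP => i; rewrite ffunE posA.
Qed.

Lemma quadtree_anc T C k : quadtree T -> T C -> k <= lvl C -> T (anc k C).
Proof.
move=> [_ _ Tparent _ _] TC; elim: k => [|k IHk] lekC; first by rewrite anc0.
rewrite -parent_anc; apply: Tparent; first by apply: IHk; lia.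
by rewrite /anc /lvl /= in lekC *; lia.
Qed.

Lemma quadtree_ext T T' : (forall C, T C <-> T' C) -> quadtree T -> quadtree T'.
Proof.
move=> eqT [Tvalid Troot Tparent Tsib [N TN]]; split.
- by move=> C /eqT; apply: Tvalid.
- exact/eqT.
- by move=> C /eqT TC lC; apply/eqT; apply: Tparent.
- by move=> C C' /eqT TC lC vC' lC' pC'; apply/eqT; apply: (Tsib C).
- by exists N => C /eqT; apply: TN.
Qed.

(* The ancestor of [C1] at the level of [C2] is a sibling of [C2]. *)
Lemma quadtree_family_related_ord T C1 C2 :
  quadtree T -> T C1 -> valid_cell C2 -> family_related_ord C1 C2 -> T C2.
Proof.
move=> qT TC1 vC2 [le21 [lC2_gt0 ancC1]].
have qT' := qT; case: qT' => _ _ _ Tsib _.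
have TA := quadtree_anc (k := lvl C1 - lvl C2) qT TC1 (leq_subr _ _).
apply: (Tsib _ _ TA) => //; rewrite /lvl in le21 lC2_gt0.
- by rewrite /anc /lvl /=; lia.
- by rewrite /anc /lvl /=; lia.
- rewrite parent_anc -(ancestor_anc ancC1); congr anc.
  by rewrite /parent /lvl /=; lia.
Qed.

End Ancestors.

Section ExtendedQuadtree.
Variables (d : nat) (T1 : cell d -> Prop) (Tb : nat -> cell d -> Prop).
Hypotheses (qT1 : quadtree T1) (extTb : extended_quadtree T1 Tb).

Lemma brand_range i C : Tb i C -> 1 <= i <= d.+1.
Proof.
case: extTb => _ Tb_out _ TbC.
by apply/negPn/negP => range_i; apply: (Tb_out i C _ TbC); lia.
Qed.

Lemma upto_succ j C : upto Tb j.+1 C <-> upto Tb j C \/ Tb j.+1 C.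
Proof.
split.
- case=> i range_i TbC; have [le_ij | eq_i] : i <= j \/ i = j.+1 by lia.
  + by left; exists i => //; lia.
  + by right; rewrite -eq_i.
- case=> [[i range_i TbC] | TbC]; first by exists i => //; lia.
  by exists j.+1 => //; lia.
Qed.

Lemma upto_refinement j : 1 <= j <= d ->
  exists2 Q, quadtree Q & forall C, upto Tb j.+1 C <-> Q C.
Proof.
case: extTb => _ _ Tb_succ range_j.
have [Q [[[qQ [sub_Q _]] _] TbQ]] := Tb_succ j range_j.
exists Q => // C; rewrite upto_succ TbQ.
split; first by case=> [/sub_Q | []].
by move=> QC; case: (classic (upto Tb j C)); [left | right].
Qed.

Lemma upto_quadtree j : 1 <= j <= d.+1 -> quadtree (upto Tb j).
Proof.
case: j => [// | [_ | j range_j]].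
- apply: (quadtree_ext _ qT1) => C; case: extTb => Tb1 _ _.
  by rewrite upto_succ Tb1; split; [right | case=> [[i]|]] => //; lia.
- have [Q qQ uptoQ] : exists2 Q, quadtree Q & forall C, upto Tb j.+2 C <-> Q C
    by apply: upto_refinement; lia.
  by apply: (quadtree_ext _ qQ) => C; rewrite uptoQ.
Qed.

Lemma brand_succ_notin_upto j C : 1 <= j -> Tb j.+1 C -> ~ upto Tb j C.
Proof.
move=> j_gt0 TbC; have range_j := brand_range TbC.
case: extTb => _ _ Tb_succ.
have [Q [_ TbQ]] := Tb_succ j ltac:(lia).
by case/TbQ: TbC.
Qed.

End ExtendedQuadtree.

Theorem lemma25 (d : nat) (T1 : cell d -> Prop) (Tb : nat -> cell d -> Prop)
  (a b : nat) (Cs : nat -> cell d) :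
  quadtree T1 -> extended_quadtree T1 Tb -> chain Tb a b Cs ->
  forall j, a <= j -> j.+1 <= b -> ~ family_related (Cs j) (Cs j.+1).
Proof.
move=> qT1 extTb [_ [brandCs chainCs]] j le_aj lt_jb.
have Tbj : Tb j (Cs j) by apply: brandCs; lia.
have Tbj1 : Tb j.+1 (Cs j.+1) by apply: brandCs; lia.
have [_ lvlCs] := chainCs j ltac:(lia).
have range_j1 := brand_range extTb Tbj1.
have j_gt0 : 0 < j by have := brand_range extTb Tbj; lia.
have uptoCj : upto Tb j (Cs j) by exists j => //; lia.
have valid_Cj1 : valid_cell (Cs j.+1).
  case: (upto_quadtree qT1 extTb range_j1) => valid _ _ _ _; apply: valid.
  by exists j.+1 => //; lia.
case=> [famCs | [le_lvl _]]; last by lia.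
apply: (brand_succ_notin_upto extTb j_gt0 Tbj1).
have qTj : quadtree (upto Tb j) by apply: (upto_quadtree qT1 extTb); lia.
exact: (quadtree_family_related_ord qTj uptoCj valid_Cj1).
Qed.
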